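(* Let $\mathbb{F}$ be a field, $\mathcal{C} \subseteq \mathbb{F}^{m \times n}$ a linear code with $k = \dim(\mathcal{C})$, and $p \in \mathbb{Z}$. Define $W_p(\mathcal{C}^\perp) = \{d_{M,p+rm}(\mathcal{C}^\perp) \mid r \in \mathbb{Z}, 1 \leq p + rm \leq mn - k\}$ and $\overline{W}_{p+k}(\mathcal{C}) = \{n + 1 - d_{M,p+k+rm}(\mathcal{C}) \mid r \in \mathbb{Z}, 1 \leq p + k + rm \leq k\}$. Then $\{1,2,\dots,n\} = W_p(\mathcal{C}^\perp) \cup \overline{W}_{p+k}(\mathcal{C})$, and this union is disjoint.
   Context: ${\rm Row}(V)$ is the row space. For a subspace $\mathcal{L} \subseteq \mathbb{F}^n$, $\mathcal{V}_\mathcal{L} = \{V \in \mathbb{F}^{m\times n} \mid {\rm Row}(V) \subseteq \mathcal{L}\}$, and for a linear code $\mathcal{D}$ and $1 \le r \le \dim\mathcal{D}$, $d_{M,r}(\mathcal{D}) = \min\{\dim \mathcal{L} \mid \mathcal{L} \subseteq \mathbb{F}^n \text{ subspace}, \dim(\mathcal{D} \cap \mathcal{V}_\mathcal{L}) \ge r\}$. The dual is $\mathcal{C}^\perp = \{D \in \mathbb{F}^{m\times n} \mid {\rm Trace}(CD^T) = 0 \ \forall C \in \mathcal{C}\}$, of dimension $mn - k$. *)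

From HB Require Import structures.
From mathcomp Require Import all_boot all_order all_algebra.
From mathcomp Require Import boolp.
Set Implicit Arguments. Unset Strict Implicit. Unset Printing Implicit Defensive.
Import Order.TTheory GRing.Theory Num.Theory.
Local Open Scope ring_scope.
Local Open Scope vspace_scope.

Section Defs.
Variables (F : fieldType) (m n : nat).

Definition rowmap (i : 'I_m) : 'Hom('M[F]_(m, n), 'rV[F]_n) :=
  linfun (fun V : 'M[F]_(m, n) => row i V).

Definition VL (L : {vspace 'rV[F]_n}) : {vspace 'M[F]_(m, n)} :=
  (\bigcap_(i < m) (rowmap i @^-1: L))%VS.

Lemma memVL (L : {vspace 'rV[F]_n}) (V : 'M[F]_(m, n)) :
  (V \in VL L) = [forall i, row i V \in L].
Proof.
apply/idP/forallP => [HV i | /(_ _) HV].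
  have sub := bigcapv_inf i (P := xpredT) (Us := fun i => rowmap i @^-1: L)
             (V := rowmap i @^-1: L) isT (subvv _).
  by have := subvP sub V HV; rewrite -memv_preim lfunE.
rewrite /VL memvE; apply/(subv_bigcapP (P := xpredT)) => i _ /=; rewrite -memvE.
by rewrite -memv_preim lfunE; apply: HV.
Qed.

Definition dM_pred (D : {vspace 'M[F]_(m, n)}) (r : nat) (k : nat) : bool :=
  `[< exists L : {vspace 'rV[F]_n}, \dim L = k /\ (r <= \dim (D :&: VL L))%N >].

(* d_{M,r}(D) = min { dim L | dim (D :&: V_L) >= r }  (0 if no such L,
   which never happens for 1 <= r <= dim D). *)
Definition dM (D : {vspace 'M[F]_(m, n)}) (r : nat) : nat :=
  match pselect (exists k, dM_pred D r k) with
  | left h => ex_minn h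
  | right _ => 0%N
  end.

Definition trform (C : 'M[F]_(m, n)) : 'Hom('M[F]_(m, n), F^o) :=
  linfun (fun D : 'M[F]_(m, n) => (\tr (C *m D^T) : F^o)).

Definition dualcode (C : {vspace 'M[F]_(m, n)}) : {vspace 'M[F]_(m, n)} :=
  (\bigcap_(c <- vbasis C) lker (trform c))%VS.

End Defs.

From HB Require Import structures.
From mathcomp Require Import all_boot all_order all_algebra.
From mathcomp Require Import boolp zify.
Set Implicit Arguments. Unset Strict Implicit. Unset Printing Implicit Defensive.
Import Order.TTheory GRing.Theory Num.Theory.
Local Open Scope ring_scope.

(* Let max_capVL D s be the largest dimension of D :&: V_L over the subspaces L
   of F^n of dimension s.  Then d_{M,r}(D) = t + 1 exactly when
   max_capVL D t < r <= max_capVL D (t + 1).  Trace duality gives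
   dim (C^perp :&: V_L) + k = m dim L + dim (C :&: V_(L^perp)), hence
   max_capVL C^perp t + k = m t + max_capVL C (n - t).  So, with
   x = max_capVL C (n - t - 1) and y = max_capVL C (n - t), the integer t + 1
   lies in W_p(C^perp) iff the class of p + k mod m meets (y - m, x], and in
   Wbar_(p+k)(C) iff it meets (x, y].  As y - m <= x <= y, these intervals
   split m consecutive integers, which meet the class exactly once. *)

Section SubspaceDimension.
Variables (F : fieldType) (vT : vectType F).
Implicit Types U W : {vspace vT}.

Lemma exists_subv_dim W s :
  (s <= \dim W)%N -> exists2 U, (U <= W)%VS & \dim U = s.
Proof.
move=> le_s; have free_W := basis_free (vbasisP W).
exists <<take s (vbasis W)>>%VS.
  by apply/span_subvP => u /mem_take /vbasis_mem.
have free_take : free (take s (vbasis W)).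
  by apply: (@catl_free _ _ (drop s (vbasis W))); rewrite cat_take_drop.
by rewrite (eqnP free_take) size_take size_tuple; case: ltnP le_s; lia.
Qed.

Lemma exists_supv_dim U s :
  (\dim U <= s <= \dim {:vT})%N -> exists2 V, (U <= V)%VS & \dim V = s.
Proof.
case/andP=> le_U_s le_s_full.
have [X sub_X dim_X] : exists2 X, (X <= U^C)%VS & \dim X = (s - \dim U)%N.
  by apply: exists_subv_dim; rewrite dimv_compl; lia.
exists (U + X)%VS; first exact: addvSl.
have UX0 : (U :&: X = 0)%VS.
  by apply/eqP; rewrite -subv0 -(capv_compl U) capvS.
by rewrite dimv_disjoint_sum // dim_X; lia.
Qed.

End SubspaceDimension.

Section Orthogonal.
Variables (F : fieldType) (vT : vectType F) (phi : vT -> 'Hom(vT, F^o)).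
(* Each phi u is linear; symmetry makes phi bilinear. *)
Hypothesis phiC : forall u v, phi u v = phi v u.
Hypothesis phi_nondeg : forall v, (forall u, phi u v = 0) -> v = 0.
Implicit Types U W : {vspace vT}.

Definition perp U := (\bigcap_(u <- vbasis U) lker (phi u))%VS.

Lemma mem_bigcap_lker (s : seq vT) v :
  (v \in \bigcap_(u <- s) lker (phi u))%VS = all (fun u => phi u v == 0) s.
Proof.
elim: s => [|u s IHs]; first by rewrite big_nil memvf.
by rewrite big_cons memv_cap memv_ker IHs.
Qed.

Lemma mem_perpP U v : reflect (forall u, u \in U -> phi u v = 0) (v \in perp U).
Proof.
rewrite /perp mem_bigcap_lker.
apply: (iffP allP) => [v_perp u /coord_vbasis-> | v_perp u /vbasis_mem/v_perp->//].
rewrite phiC linear_sum big1 // => i _; rewrite linearZ /= -phiC.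
by rewrite (eqP (v_perp _ (mem_nth 0 _))) ?scaler0 // size_tuple.
Qed.

Lemma perpD U W : perp (U + W) = (perp U :&: perp W)%VS.
Proof.
apply/vspaceP => v; rewrite memv_cap.
apply/mem_perpP/andP => [v_perp | [/mem_perpP vU /mem_perpP vW]].
  split; apply/mem_perpP => u u_in; apply: v_perp.
    exact: subvP (addvSl U W) _ u_in.
  exact: subvP (addvSr U W) _ u_in.
move=> _ /memv_addP[u u_in [w w_in ->]].
by rewrite phiC linearD /= [phi v u]phiC [phi v w]phiC vU // vW // addr0.
Qed.

Lemma perp_fullv : perp fullv = 0%VS.
Proof.
apply/vspaceP => v; rewrite memv0; apply/mem_perpP/eqP => [v_perp | -> u _].
  by apply: phi_nondeg => u; apply: v_perp; rewrite memvf.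
by rewrite linear0.
Qed.

Lemma dim_bigcap_lker_ge (s : seq vT) :
  (\dim {:vT} <= \dim (\bigcap_(u <- s) lker (phi u)) + size s)%N.
Proof.
elim: s => [|u s IHs]; first by rewrite big_nil addn0.
rewrite big_cons /=; move: IHs; set K := (\bigcap_(u <- s) lker (phi u))%VS.
have := dimv_sum_cap (lker (phi u)) K; have := dimvS (subvf (lker (phi u) + K)).
have := limg_ker_dim (phi u) fullv; rewrite capfv.
have : (\dim (phi u @: fullv) <= 1)%N by rewrite (leq_trans (dimvS (subvf _))) ?dimvf.
lia.
Qed.

Lemma dim_perp_ge U : (\dim {:vT} <= \dim (perp U) + \dim U)%N.
Proof. by have := dim_bigcap_lker_ge (vbasis U); rewrite size_tuple. Qed.

Lemma dim_perp U : \dim (perp U) = (\dim {:vT} - \dim U)%N.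
Proof.
(* perp U and perp U^C meet in perp fullv = 0. *)
have perpUC0 : (perp U :&: perp U^C = 0)%VS by rewrite -perpD addv_complf perp_fullv.
have := dimv_disjoint_sum perpUC0; have := dimvS (subvf (perp U + perp U^C)).
have := dim_perp_ge U; have := dim_perp_ge U^C; rewrite dimv_compl.
have := dimvS (subvf U); lia.
Qed.

Lemma perpK U : perp (perp U) = U.
Proof.
apply/esym/eqP; rewrite eqEdim !dim_perp subKn ?leqnn ?andbT ?dimvS ?subvf //.
apply/subvP => u u_in; apply/mem_perpP => v /mem_perpP v_perp.
by rewrite phiC v_perp.
Qed.

End Orthogonal.

Section TraceForm.
Variables (F : fieldType) (m n : nat).
Implicit Types (C : {vspace 'M[F]_(m, n)}) (U V : 'M[F]_(m, n)).

Lemma trform_sum U V : trform U V = \sum_i \sum_j U i j * V i j.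
Proof.
(* lfunE needs V |-> tr (U V^T) packaged as a linear function. *)
pose trU := fun V : 'M[F]_(m, n) => (\tr (U *m V^T) : F^o).
have trU_linear : linear trU.
  by move=> a X Y; rewrite /trU linearP /= mulmxDr -scalemxAr linearD linearZ.
pose trUL : {linear _ -> _} := HB.pack trU (GRing.isLinear.Build _ _ _ _ trU trU_linear).
rewrite (lfunE trUL V); apply: eq_bigr => i _; rewrite mxE.
by apply: eq_bigr => j _; rewrite mxE.
Qed.

Lemma trformC U V : trform U V = trform V U.
Proof. by rewrite !trform_sum; apply: eq_bigr => i _; apply: eq_bigr => j _; rewrite mulrC. Qed.

Lemma trform_nondeg V : (forall U, trform U V = 0) -> V = 0.
Proof.
move=> V_perp; apply/matrixP => i j; rewrite mxE -[RHS](V_perp (delta_mx i j)).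
rewrite trform_sum (bigD1 i) //= (bigD1 j) //= !mxE !eqxx mul1r.
rewrite big1 => [|j' /negPf nj]; last by rewrite mxE eqxx nj mul0r.
rewrite big1 => [|i' /negPf ni]; last by rewrite big1 // => j' _; rewrite mxE ni mul0r.
by rewrite !addr0.
Qed.

Lemma mem_dualcodeP C V : reflect (forall U, U \in C -> trform U V = 0) (V \in dualcode C).
Proof. exact: (mem_perpP trformC). Qed.

Lemma dim_dualcode C : \dim (dualcode C) = (m * n - \dim C)%N.
Proof. by rewrite (dim_perp trformC trform_nondeg) dimvf. Qed.

Lemma dualcodeK C : dualcode (dualcode C) = C.
Proof. exact: (perpK trformC trform_nondeg). Qed.

Lemma dualcodeD C1 C2 : dualcode (C1 + C2) = (dualcode C1 :&: dualcode C2)%VS.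
Proof. exact: (perpD trformC). Qed.

End TraceForm.

Section RowSpaceConstraint.
Variables (F : fieldType) (m n : nat).
Implicit Types (L : {vspace 'rV[F]_n}) (C : {vspace 'M[F]_(m, n)}).

Lemma dimv_rV : \dim {:'rV[F]_n} = n.
Proof. by rewrite dimvf /dim /= mul1n. Qed.

Lemma dimv_rV_le L : (\dim L <= n)%N.
Proof. by have := dimvS (subvf L); rewrite dimv_rV. Qed.

Lemma dimv_M : \dim {:'M[F]_(m, n)} = (m * n)%N.
Proof. exact: dimvf. Qed.

Lemma VLS L1 L2 : (L1 <= L2)%VS -> (VL m L1 <= VL m L2)%VS.
Proof.
move=> sL12; apply/subvP => D; rewrite !memVL => /forallP D_L1.
by apply/forallP => i; apply: subvP sL12 _ (D_L1 i).
Qed.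

Lemma VLfull : VL m (fullv : {vspace 'rV[F]_n}) = fullv.
Proof. by apply/vspaceP => D; rewrite memVL memvf; apply/forallP => i; rewrite memvf. Qed.

Lemma sum_delta_mul_row (D : 'M[F]_(m, n)) : D = \sum_i delta_mx i 0 *m row i D.
Proof.
apply/matrixP => a b; rewrite summxE (bigD1 a) //= big1 => [|i /negPf ni].
  by rewrite addr0 !mxE big_ord1 !mxE !eqxx mul1r.
by rewrite !mxE big_ord1 !mxE eq_sym ni mul0r.
Qed.

Lemma dimVL_le L : (\dim (VL m L) <= m * \dim L)%N.
Proof.
pose put_row i : 'Hom('rV[F]_n, 'M[F]_(m, n)) := linfun (mulmx (delta_mx i 0)).
have sub_sum : (VL m L <= \sum_i put_row i @: L)%VS.
  apply/subvP => D; rewrite memVL => /forallP D_L.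
  rewrite [D]sum_delta_mul_row; apply: memv_sumr => i _.
  by rewrite -[_ *m _](lfunE (mulmx _)) memv_img.
apply: leq_trans (dimvS sub_sum) _; apply: leq_trans (dimv_sum_leqif _).1 _.
rewrite -[X in (_ <= X * _)%N]card_ord -sum_nat_const; apply: leq_sum => i _.
by rewrite -(limg_ker_dim (put_row i) L) leq_addl.
Qed.

Lemma VL_add_compl L : (VL m L + VL m L^C)%VS = fullv.
Proof.
apply/vspaceP => D; rewrite memvf; apply/memv_addP.
have rowD i : row i D \in (L + L^C)%VS by rewrite addv_complf memvf.
exists (\matrix_i addv_pi1 L L^C (row i D)).
  by rewrite memVL; apply/forallP => i; rewrite rowK memv_pi1.
exists (\matrix_i addv_pi2 L L^C (row i D)).
  by rewrite memVL; apply/forallP => i; rewrite rowK memv_pi2.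
by apply/row_matrixP => i; rewrite linearD /= !rowK addv_pi1_pi2.
Qed.

Lemma dimVL L : \dim (VL m L) = (m * \dim L)%N.
Proof.
(* VL m L and VL m L^C span everything, and each obeys dimVL_le. *)
have : (m * \dim L <= m * n)%N by rewrite leq_mul2l dimv_rV_le orbT.
have := dimVL_le L; have := dimVL_le L^C; rewrite dimv_compl dimv_rV mulnBr.
have := dimv_sum_cap (VL m L) (VL m L^C); rewrite VL_add_compl dimv_M; lia.
Qed.

Lemma trform_rows (U V : 'M[F]_(m, n)) :
  trform U V = \sum_i trform (row i U) (row i V).
Proof.
rewrite trform_sum; apply: eq_bigr => i _; rewrite trform_sum big_ord1.
by apply: eq_bigr => j _; rewrite !mxE.
Qed.

(* For L : {vspace 'rV_n}, i.e. 'M_(1, n), dualcode L is the orthogonal of L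
   for the dot product. *)
Lemma dualcode_VL L : dualcode (VL m L) = VL m (dualcode L).
Proof.
apply/esym/eqP; rewrite eqEdim !dim_dualcode !dimVL dim_dualcode mul1n mulnBr leqnn andbT.
apply/subvP => D; rewrite memVL => /forallP D_perp; apply/mem_dualcodeP => X.
rewrite memVL trform_rows => /forallP X_L; rewrite big1 // => i _.
exact: mem_dualcodeP (D_perp i) _ (X_L i).
Qed.

Lemma dim_dualcode_capVL C L :
  (\dim (dualcode C :&: VL m L) + \dim C = m * \dim L + \dim (C :&: VL m (dualcode L)))%N.
Proof.
have -> : VL m L = dualcode (VL m (dualcode L)) by rewrite dualcode_VL dualcodeK.
rewrite -dualcodeD dim_dualcode.
have := dimv_sum_cap C (VL m (dualcode L)); rewrite dimVL dim_dualcode mul1n mulnBr.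
have := dimvS (subvf (C + VL m (dualcode L))); rewrite dimv_M.
have : (m * \dim L <= m * n)%N by rewrite leq_mul2l dimv_rV_le orbT.
lia.
Qed.

End RowSpaceConstraint.

Section MaxCapVL.
Variables (F : fieldType) (m n : nat) (D : {vspace 'M[F]_(m, n)}).
Implicit Types (L : {vspace 'rV[F]_n}) (r s : nat).

Lemma dM_predP r s :
  reflect (exists L, \dim L = s /\ (r <= \dim (D :&: VL m L))%N) (dM_pred D r s).
Proof. exact: asboolP. Qed.

Lemma dM_pred_le_dim r s : dM_pred D r s -> (r <= \dim D)%N.
Proof. by case/dM_predP => L [_ /leq_trans->] //; rewrite dimvS ?capvSl. Qed.

Lemma dM_pred_le_n r s : dM_pred D r s -> (s <= n)%N.
Proof. by case/dM_predP => L [<- _]; apply: dimv_rV_le. Qed.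

Definition max_capVL s := (\max_(c < (\dim D).+1 | dM_pred D c s) c)%N.

Lemma max_capVL_le_dim s : (max_capVL s <= \dim D)%N.
Proof. by apply/bigmax_leqP => c _; rewrite -ltnS. Qed.

Lemma dM_predE r s : (s <= n)%N -> dM_pred D r s = (r <= max_capVL s)%N.
Proof.
move=> le_s_n.
have [L _ dim_L] : exists2 L : {vspace 'rV[F]_n}, (L <= fullv)%VS & \dim L = s.
  by apply: exists_subv_dim; rewrite dimv_rV.
have pred0 : dM_pred D 0 s by apply/dM_predP; exists L.
apply/idP/idP => [pred_r | ].
  have lt_r : (r < (\dim D).+1)%N by rewrite ltnS (dM_pred_le_dim pred_r).
  exact: (leq_bigmax_cond (Ordinal lt_r)).
rewrite /max_capVL (bigop.bigmax_eq_arg (ord0 : 'I_(\dim D).+1)) //.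
case: arg_maxnP => //= c.
case/dM_predP => L' [dim_L' le_c] _ le_rc; apply/dM_predP; exists L'.
by split; last exact: leq_trans le_rc le_c.
Qed.

Lemma max_capVL_eq s a :
  (s <= n)%N -> (forall r, dM_pred D r s = (r <= a)%N) -> max_capVL s = a.
Proof.
move=> le_s_n pred_s; apply/eqP; rewrite eqn_leq.
by have := pred_s a; have := pred_s (max_capVL s); rewrite !dM_predE // !leqnn => <- ->.
Qed.

Lemma max_capVL0 : max_capVL 0 = 0%N.
Proof.
apply: max_capVL_eq => // r; apply/dM_predP/idP => [[L [dim_L le_r]] | ].
  by rewrite -(muln0 m) -dim_L -(dimVL m L) (leq_trans le_r) ?dimvS ?capvSr.
by rewrite leqn0 => /eqP->; exists 0%VS; rewrite dimv0.
Qed.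

Lemma max_capVL_full : max_capVL n = \dim D.
Proof.
apply: max_capVL_eq => // r; apply/dM_predP/idP => [[L [_ le_r]] | le_r].
  by rewrite (leq_trans le_r) ?dimvS ?capvSl.
by exists fullv; rewrite dimv_rV VLfull capvf.
Qed.

Lemma max_capVL_mono s1 s2 : (s1 <= s2 <= n)%N -> (max_capVL s1 <= max_capVL s2)%N.
Proof.
case/andP=> le_s12 le_s2n; rewrite -dM_predE //.
have := leqnn (max_capVL s1); rewrite -dM_predE ?(leq_trans le_s12) //.
case/dM_predP => L [dim_L le_max].
have [L' sub_L' dim_L'] : exists2 L', (L <= L')%VS & \dim L' = s2.
  by apply: exists_supv_dim; rewrite dim_L le_s12 dimv_rV.
apply/dM_predP; exists L'; split => //.
by rewrite (leq_trans le_max) ?dimvS ?capvS ?VLS.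
Qed.

Lemma max_capVL_S_le s : (s < n)%N -> (max_capVL s.+1 <= max_capVL s + m)%N.
Proof.
move=> lt_s_n; rewrite addnC -leq_subLR -dM_predE ?(ltnW lt_s_n) //.
have := leqnn (max_capVL s.+1); rewrite -dM_predE //.
case/dM_predP => L' [dim_L' le_max].
have [L sub_L dim_L] : exists2 L, (L <= L')%VS & \dim L = s.
  by apply: exists_subv_dim; rewrite dim_L'.
apply/dM_predP; exists L; split => //.
have sub_sum : (D :&: VL m L' + VL m L <= VL m L')%VS by rewrite subv_add capvSr VLS.
have := dimv_sum_cap (D :&: VL m L') (VL m L); have := dimvS sub_sum.
have : (\dim (D :&: VL m L' :&: VL m L) <= \dim (D :&: VL m L))%N.
  by rewrite dimvS ?capvS ?capvSl.
rewrite !dimVL dim_L dim_L' mulnS; lia.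
Qed.

Lemma dM_leq r s :
  (r <= \dim D)%N -> (s <= n)%N -> (dM D r <= s)%N = (r <= max_capVL s)%N.
Proof.
move=> le_r le_s_n; rewrite -dM_predE //.
have ex_r : exists k, dM_pred D r k by exists n; rewrite dM_predE // max_capVL_full.
rewrite /dM; case: pselect => [ex|/(_ ex_r)//]; case: ex_minnP => d pred_d min_d.
apply/idP/idP => [le_ds | /min_d//].
have le_dn := dM_pred_le_n pred_d.
rewrite dM_predE // in pred_d; rewrite dM_predE //.
by apply: (leq_trans pred_d); rewrite max_capVL_mono // le_ds.
Qed.

Lemma dM_eqS r s : (r <= \dim D)%N -> (s < n)%N ->
  (dM D r == s.+1) = (max_capVL s < r <= max_capVL s.+1)%N.
Proof.
move=> le_r lt_s_n.
by rewrite eqn_leq dM_leq // ltnNge dM_leq ?(ltnW lt_s_n) // -ltnNge andbC.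
Qed.

Lemma dM_range r : (0 < r <= \dim D)%N -> (0 < dM D r <= n)%N.
Proof.
case/andP=> r_gt0 le_r; rewrite dM_leq // max_capVL_full le_r andbT.
by rewrite ltnNge dM_leq // max_capVL0 -ltnNge.
Qed.

End MaxCapVL.

Lemma max_capVL_dualcode (F : fieldType) (m n : nat) (C : {vspace 'M[F]_(m, n)}) t :
  (t <= n)%N -> (max_capVL (dualcode C) t + \dim C = m * t + max_capVL C (n - t))%N.
Proof.
(* L |-> dualcode L swaps the subspaces of dimensions t and n - t. *)
move=> le_t_n; set y := max_capVL C (n - t).
have predE c : dM_pred (dualcode C) c t = (c + \dim C <= m * t + y)%N.
  apply/dM_predP/idP => [[L [dim_L le_c]] | le_c].
    have := dim_dualcode_capVL C L; rewrite dim_L.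
    have : dM_pred C (\dim (C :&: VL m (dualcode L))) (n - t).
      by apply/dM_predP; exists (dualcode L); rewrite dim_dualcode mul1n dim_L.
    rewrite dM_predE ?leq_subr // -/y; lia.
  have := leqnn y; rewrite -dM_predE ?leq_subr // => /dM_predP[L' [dim_L' le_y]].
  exists (dualcode L'); split; first by rewrite dim_dualcode mul1n dim_L'; lia.
  have := dim_dualcode_capVL C (dualcode L').
  rewrite dualcodeK dim_dualcode mul1n dim_L' subKn //; lia.
have := dM_predE (dualcode C) 0 le_t_n; rewrite predE leq0n => /esym k_le.
rewrite (@max_capVL_eq _ _ _ _ t (m * t + y - \dim C)) // => [|r]; first by lia.
by rewrite predE; apply/idP/idP; lia.
Qed.

Section ResidueClass.
Implicit Types z m lo hi x y : int.

Definition class_meets z m lo hi := exists r : int, lo < z + r * m <= hi.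

Lemma class_meets_translate z m lo hi z' lo' hi' s :
  lo' - lo = hi' - hi -> z' - z = lo' - lo + s * m ->
  class_meets z m lo hi <-> class_meets z' m lo' hi'.
Proof.
move=> shift_hi shift_z; split=> [[r meets] | [r meets]].
  by exists (r - s); rewrite mulrBl; lia.
by exists (r + s); rewrite mulrDl; lia.
Qed.

Lemma class_meets_split z m x y : 0 < m -> y - m <= x <= y ->
  (class_meets z m (y - m) x \/ class_meets z m x y) /\
  ~ (class_meets z m (y - m) x /\ class_meets z m x y).
Proof.
move=> m_gt0 /andP[le_ym_x le_xy]; split.
  (* z + ((y - z) %/ m) * m = y - (y - z) %% m lies in (y - m, y]. *)
  have := divz_eq (y - z) m; have := ltz_pmod (y - z) m_gt0.
  have := modz_ge0 (y - z) (lt0r_neq0 m_gt0).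
  case: (lerP (z + ((y - z) %/ m)%Z * m) x) => [le|lt] *.
    by left; exists ((y - z) %/ m)%Z; lia.
  by right; exists ((y - z) %/ m)%Z; lia.
case=> -[r1 meets1] [r2 meets2].
have /andP[pos small] : 0 < (r2 - r1) * m < m by rewrite mulrBl; lia.
case: (lerP (r2 - r1) 0) => [le0 | gt0].
  by have := mulr_le0_ge0 le0 (ltW m_gt0); lia.
have : 0 <= (r2 - r1 - 1) * m by rewrite mulr_ge0 ?(ltW m_gt0) //; lia.
by rewrite mulrBl mul1r; lia.
Qed.

Lemma class_meets_window (N lo hi : nat) (P : nat -> Prop) z m :
  (hi <= N)%N -> (forall b : nat, (0 < b <= N)%N -> P b <-> (lo < b <= hi)%N) ->
  (exists r : int, [/\ 1 <= z + r * m, z + r * m <= N%:Z & P (absz (z + r * m))]) <->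
  class_meets z m lo%:Z hi%:Z.
Proof.
move=> le_hi window; split=> [[r [ge1 leN P_b]] | [r meets]]; exists r.
  have := (window _ _).1 P_b; lia.
have : P (absz (z + r * m)) by apply/window; lia.
by split => //; lia.
Qed.

End ResidueClass.

Theorem proposition18 (F : fieldType) (m n : nat)
    (hm : (0 < m)%N) (C : {vspace 'M[F]_(m, n)}) (p : int) :
  let k : nat := \dim C in
  let inW (j : int) := exists r : int,
      [/\ 1 <= p + r * m%:Z, p + r * m%:Z <= (m * n - k)%N%:Z &
          j = (dM (dualcode C) (absz (p + r * m%:Z)))%:Z] in
  let inWbar (j : int) := exists r : int,
      [/\ 1 <= p + k%:Z + r * m%:Z, p + k%:Z + r * m%:Z <= k%:Z &
          j = n.+1%:Z - (dM C (absz (p + k%:Z + r * m%:Z)))%:Z] in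
  forall j : int,
    ((1 <= j <= n%:Z) <-> (inW j \/ inWbar j)) /\ ~ (inW j /\ inWbar j).
Proof.
move=> k inW inWbar j.
have dim_dual : \dim (dualcode C) = (m * n - k)%N := dim_dualcode C.
have inW_range : inW j -> 1 <= j <= n%:Z.
  case=> r [r_ge1 r_le ->]; have := dM_range (D := dualcode C) (r := absz (p + r * m%:Z)).
  rewrite dim_dual; lia.
have inWbar_range : inWbar j -> 1 <= j <= n%:Z.
  case=> r [r_ge1 r_le ->]; have := dM_range (D := C) (r := absz (p + k%:Z + r * m%:Z)); lia.
suff in_range : 1 <= j <= n%:Z -> (inW j \/ inWbar j) /\ ~ (inW j /\ inWbar j) by tauto.
move=> j_range.
have [t j_eq lt_t_n] : exists2 t : nat, j = t.+1%:Z & (t < n)%N by exists (absz j).-1; lia.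
have lt_s_n : (n - t.+1 < n)%N by lia.
set x := max_capVL C (n - t.+1); set y := max_capVL C (n - t).
have inW_meets : inW j <-> class_meets (p + k%:Z) m%:Z (y%:Z - m%:Z) x%:Z.
  have le_hi : (max_capVL (dualcode C) t.+1 <= m * n - k)%N by rewrite -dim_dual max_capVL_le_dim.
  have window b : (0 < b <= m * n - k)%N -> j = (dM (dualcode C) b)%:Z <->
      (max_capVL (dualcode C) t < b <= max_capVL (dualcode C) t.+1)%N.
    case/andP=> b_gt0 le_b; rewrite -dM_eqS ?dim_dual // j_eq.
    by split=> [e|/eqP->//]; apply/eqP; lia.
  apply: iff_trans (class_meets_window p m%:Z le_hi window) _.
  have := max_capVL_dualcode C (ltnW lt_t_n); have := max_capVL_dualcode C lt_t_n.
  by rewrite -/x -/y => *; apply: (class_meets_translate (s := t.+1%:Z)); lia.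
have inWbar_meets : inWbar j <-> class_meets (p + k%:Z) m%:Z x%:Z y%:Z.
  have window a : (0 < a <= k)%N -> j = n.+1%:Z - (dM C a)%:Z <-> (x < a <= y)%N.
    case/andP=> a_gt0 le_a; rewrite /y -(subnSK lt_t_n) -dM_eqS // subnSK // j_eq.
    by split=> [e|/eqP->]; [apply/eqP|]; lia.
  exact: (class_meets_window (p + k%:Z) m%:Z (max_capVL_le_dim C _) window).
have le_xy : (x <= y)%N by apply: max_capVL_mono; lia.
have le_y : (y <= x + m)%N by rewrite /y -(subnSK lt_t_n) max_capVL_S_le.
by have [] := @class_meets_split (p + k%:Z) m%:Z x%:Z y%:Z; [lia | lia | tauto].
Qed.
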